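(* In the multi-user imperfect-prediction setting below, let $\phi_I^*=\min_{\lambda\ge0}g_I(\lambda)$ and $\phi_0^*=\min_{\lambda\ge0}g_0(\lambda)$, let $\lambda_0^*$ be a minimizer of $g_0^l$ and $\lambda_I^*$ a minimizer of $g_I^l$ over $\lambda\ge0$. Then $$g_I^l(\lambda_I^* )-g_0^u(\lambda_I^* )\le\phi_I^*-\phi_0^*\le g_I^u(\lambda_0^* )-g_0^l(\lambda_0^* ).$$
   Context: $N$ users; $B>0$; $a_{\max}>0$. User $n$ has arrival rate $a_n\ge0$, true-positive rate $p_n$ and false-negative rate $q_n$ with $0\le q_n<p_n\le1$ and $q_n\le a_n/a_{\max}\le p_n$, $\tilde a_n=\frac{a_n-a_{\max}q_n}{p_n-q_n}$, a probability vector $\boldsymbol\eta_n$ on its channel states, $\beta_n\ge0$, integers $\tau_n\ge1$, $D_n\ge1$, a Markov channel on $\{1,\dots,K_n\}$ with transition matrix $(P_n^{i,j})$, a finite $\mathcal E\subset[0,\infty)$ containing $0$ and a positive element, and $\zeta_n(i,\cdot):\mathcal E\to[0,1]$ with $\zeta_n(i,0)=0$, $\zeta_n(i,e)>0$ for $e>0$, strictly increasing; states totally ordered by $\zeta_n$ (for all $i,j$ either $\zeta_n(i,e)\ge\zeta_n(j,e)\ \forall e$ or $\le\ \forall e$) with extremal states $i_n^{\max},i_n^{\min}$. For $\lambda\ge0$ (all functions depend on $\lambda$; maxima over $e\in\mathcal E$): $V_n^l(0)=0$, $V_n^l(\tau)=\max_{e>0}\frac{1-[1-\zeta_n(i_n^{\min},e)]^{\tau}}{\zeta_n(i_n^{\min},e)}[-\lambda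 e+\zeta_n(i_n^{\min},e)\beta_n]$; $V_n^u(0)=0$, $V_n^u(\tau)=\sum_{z=1}^{\tau}\max_{e}\{-\lambda e+\zeta_n(i_n^{\max},e)(\beta_n-\max\{0,V_n^l(z-1)\})\}$; for $\tau_n\le\tau\le\tau_n+D_n$, $\tilde V_n^l(\tau)=\max_{e>0}\{-(1-p_n)\frac{1-[1-\zeta_n(i_n^{\min},e)]^{\tau-\tau_n}}{\zeta_n(i_n^{\min},e)}\lambda e+p_n\frac{1-[1-\zeta_n(i_n^{\min},e)]^{\tau}}{\zeta_n(i_n^{\min},e)}[-\lambda e+\zeta_n(i_n^{\min},e)\beta_n]\}$ and $\tilde V_n^u(\tau)=\sum_{z=\tau_n+1}^{\tau}\max_e\{-\lambda e+\zeta_n(i_n^{\max},e)(p_n\beta_n-\max\{0,\tilde V_n^l(\tau_n),\tilde V_n^l(z-1)\})\}+p_n\sum_{z=1}^{\tau_n}\max_e\{-\lambda e+\zeta_n(i_n^{\max},e)(\beta_n-\max\{0,V_n^l(z-1)\})\}$. The imperfect-prediction value function: $V_n^I(0,0,i)=0$; $V_n^I(0,\tau,i)=\max_e\{-\lambda e+\zeta_n(i,e)\beta_n+(1-\zeta_n(i,e))\sum_jP_n^{i,j}V_n^I(0,\tau-1,j)\}$ for $1\le\tau\le\tau_n$; $V_n^I(0,\tau_n+1,i)=\max_e\{-\lambda e+\zeta_n(i,e)p_n\beta_n+p_n(1-\zeta_n(i,e))\sum_jP_n^{i,j}V_n^I(0,\tau_n,j)\}$; $V_n^I(0,\tau,i)=\max_e\{-\lambda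 e+\zeta_n(i,e)p_n\beta_n+(1-\zeta_n(i,e))\sum_jP_n^{i,j}V_n^I(0,\tau-1,j)\}$ for $\tau_n+2\le\tau\le\tau_n+D_n$. Define $g_I(\lambda)=\lambda B+\sum_n[\tilde a_n\sum_i\eta_n^iV_n^I(0,\tau_n+D_n,i)+(a_{\max}-\tilde a_n)q_n\sum_i\eta_n^iV_n^I(0,\tau_n,i)]$, $g_I^u(\lambda)=\lambda B+\sum_n\{\tilde a_n\min[p_n\beta_n,\tilde V_n^u(\tau_n+D_n)]+(a_{\max}-\tilde a_n)q_n\min[\beta_n,V_n^u(\tau_n)]\}$, $g_I^l(\lambda)=\lambda B+\sum_n\{\tilde a_n\max[0,\tilde V_n^l(\tau_n),\tilde V_n^l(\tau_n+D_n)]+(a_{\max}-\tilde a_n)q_n\max[0,V_n^l(\tau_n)]\}$. No-prediction functions: $g_0(\lambda)=\lambda B+\sum_n a_n\sum_i\eta_n^iV_n^I(0,\tau_n,i)$, $g_0^u(\lambda)=\lambda B+\sum_n a_n\min\{\beta_n,V_n^u(\tau_n)\}$, $g_0^l(\lambda)=\lambda B+\sum_n a_n\max\{0,V_n^l(\tau_n)\}$. $g_I$, $g_0$ are the Lagrange dual functions with imperfect prediction and without prediction; $\phi_I^*,\phi_0^*$ the optimal weighted timely-throughputs. *)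

(* the statement is purely order-theoretic/algebraic (finite
   maxima, finite sums, powers, division), so it is stated over an arbitrary
   real field R : realFieldType (the paper's setting is R = the reals). *)
From HB Require Import structures.
From mathcomp Require Import all_boot all_order all_algebra.
Set Implicit Arguments. Unset Strict Implicit. Unset Printing Implicit Defensive.
Import Order.TTheory GRing.Theory Num.Theory.
Local Open Scope ring_scope.

(* Data of one user n. Channel states are 'I_(u_K u) (i.e. {1..K_n} shifted). *)
Record user (R : realFieldType) := User {
  u_K : nat;
  u_zeta : 'I_u_K -> R -> R;
  u_P : 'I_u_K -> 'I_u_K -> R;
  u_eta : 'I_u_K -> R;
  u_imax : 'I_u_K;
  u_imin : 'I_u_K;
  u_a : R; u_p : R; u_q : R; u_beta : R;
  u_tau : nat; u_D : nat }.
Arguments u_K {R} u.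
Arguments u_zeta {R} u _ _.
Arguments u_P {R} u _ _.
Arguments u_eta {R} u _.
Arguments u_imax {R} u.
Arguments u_imin {R} u.
Arguments u_a {R} u.
Arguments u_p {R} u.
Arguments u_q {R} u.
Arguments u_beta {R} u.
Arguments u_tau {R} u.
Arguments u_D {R} u.

Section Defs.
Variable R : realFieldType.
Variable E : seq R.

(* max over e in E (E assumed nonempty; the seed is an element of E) *)
Definition maxE (f : R -> R) : R := \big[Order.max/f (head 0 E)]_(e <- E) f e.
Definition maxpos (f : R -> R) : R :=
  let Ep := [seq e <- E | 0 < e] in \big[Order.max/f (head 0 Ep)]_(e <- Ep) f e.

Variable lam : R.
Variable u : user R.

Definition zmin (e : R) := u_zeta u (u_imin u) e.
Definition zmax (e : R) := u_zeta u (u_imax u) e.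

Definition Vl (t : nat) : R :=
  if t is 0 then 0 else
  maxpos (fun e => (1 - (1 - zmin e) ^+ t) / zmin e * (- (lam * e) + zmin e * u_beta u)).

Definition Vu (t : nat) : R :=
  \sum_(1 <= z < t.+1)
     maxE (fun e => - (lam * e) + zmax e * (u_beta u - Order.max 0 (Vl z.-1))).

(* \tilde V_n^l, used for tau_n <= t <= tau_n + D_n *)
Definition tVl (t : nat) : R :=
  maxpos (fun e =>
    - ((1 - u_p u) * ((1 - (1 - zmin e) ^+ (t - u_tau u)) / zmin e) * (lam * e))
    + u_p u * ((1 - (1 - zmin e) ^+ t) / zmin e) * (- (lam * e) + zmin e * u_beta u)).

Definition tVu (t : nat) : R :=
  \sum_(u_tau u + 1 <= z < t.+1)
     maxE (fun e => - (lam * e) + zmax e *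
        (u_p u * u_beta u - Order.max 0 (Order.max (tVl (u_tau u)) (tVl z.-1))))
  + u_p u * \sum_(1 <= z < (u_tau u).+1)
     maxE (fun e => - (lam * e) + zmax e * (u_beta u - Order.max 0 (Vl z.-1))).

Fixpoint VI (t : nat) : 'I_(u_K u) -> R :=
  match t with
  | 0 => fun _ => 0
  | t'.+1 => fun i =>
     let ev := \sum_(j : 'I_(u_K u)) u_P u i j * VI t' j in
     let z e := u_zeta u i e in
     if (t'.+1 <= u_tau u)%N then
       maxE (fun e => - (lam * e) + z e * u_beta u + (1 - z e) * ev)
     else if t' == u_tau u then
       maxE (fun e => - (lam * e) + z e * u_p u * u_beta u + u_p u * (1 - z e) * ev)
     else
       maxE (fun e => - (lam * e) + z e * u_p u * u_beta u + (1 - z e) * ev)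
  end.

Definition EVI (t : nat) : R := \sum_(i : 'I_(u_K u)) u_eta u i * VI t i.

End Defs.

Section G.
Variable R : realFieldType.
Variables (E : seq R) (B amax : R) (N : nat) (us : 'I_N -> user R).

Definition ta (u : user R) : R := (u_a u - amax * u_q u) / (u_p u - u_q u).

Definition gI (lam : R) : R := lam * B + \sum_(n < N)
  (ta (us n) * EVI E lam (us n) (u_tau (us n) + u_D (us n))
   + (amax - ta (us n)) * u_q (us n) * EVI E lam (us n) (u_tau (us n))).

Definition gIu (lam : R) : R := lam * B + \sum_(n < N)
  (ta (us n) * Order.min (u_p (us n) * u_beta (us n))
                         (tVu E lam (us n) (u_tau (us n) + u_D (us n)))
   + (amax - ta (us n)) * u_q (us n)
       * Order.min (u_beta (us n)) (Vu E lam (us n) (u_tau (us n)))).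

Definition gIl (lam : R) : R := lam * B + \sum_(n < N)
  (ta (us n) * Order.max 0 (Order.max (tVl E lam (us n) (u_tau (us n)))
                                      (tVl E lam (us n) (u_tau (us n) + u_D (us n))))
   + (amax - ta (us n)) * u_q (us n)
       * Order.max 0 (Vl E lam (us n) (u_tau (us n)))).

Definition g0 (lam : R) : R := lam * B + \sum_(n < N)
  u_a (us n) * EVI E lam (us n) (u_tau (us n)).

Definition g0u (lam : R) : R := lam * B + \sum_(n < N)
  u_a (us n) * Order.min (u_beta (us n)) (Vu E lam (us n) (u_tau (us n))).

Definition g0l (lam : R) : R := lam * B + \sum_(n < N)
  u_a (us n) * Order.max 0 (Vl E lam (us n) (u_tau (us n))).
End G.

Definition user_ok (R : realFieldType) (E : seq R) (amax : R) (u : user R) : Prop :=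
  (0 <= u_a u /\ 0 <= u_q u /\ u_q u < u_p u /\ u_p u <= 1 /\
   u_q u <= u_a u / amax /\ u_a u / amax <= u_p u /\ 0 <= u_beta u /\
   (0 < u_tau u)%N /\ (0 < u_D u)%N) /\
  ((forall i, 0 <= u_eta u i) /\ \sum_i u_eta u i = 1) /\
  ((forall i j, 0 <= u_P u i j) /\ (forall i, \sum_j u_P u i j = 1)) /\
  (forall i e, e \in E -> 0 <= u_zeta u i e <= 1) /\
  (forall i, u_zeta u i 0 = 0) /\
  (forall i e, e \in E -> 0 < e -> 0 < u_zeta u i e) /\
  (forall i e e', e \in E -> e' \in E -> e < e' -> u_zeta u i e < u_zeta u i e') /\
  (forall i j, (forall e, e \in E -> u_zeta u j e <= u_zeta u i e) \/
               (forall e, e \in E -> u_zeta u i e <= u_zeta u j e)) /\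
  (forall j e, e \in E -> u_zeta u j e <= u_zeta u (u_imax u) e) /\
  (forall j e, e \in E -> u_zeta u (u_imin u) e <= u_zeta u j e).

From HB Require Import structures.
From mathcomp Require Import all_boot all_order all_algebra.
From mathcomp Require Import ring lra.
Import Order.TTheory GRing.Theory Num.Theory.
Set Implicit Arguments. Unset Strict Implicit. Unset Printing Implicit Defensive.
Local Open Scope ring_scope.

(* For every λ ≥ 0 and every user, the value function V^I is sandwiched between
   the explicit bounds.  The lower bounds are the values of using one fixed
   power e > 0 in every slot while the channel sits in its worst state (a
   geometric sum in ζ(i^min, e)); the upper bounds come from the best state,
   together with the fact that the continuation value is already at least the
   lower bound.  Summing over users gives g^l ≤ g ≤ g^u pointwise for both
   dual functions, and comparing minima yields the two inequalities. *)

Section ConvexSum.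
Variables (R : numDomainType) (K : nat) (w : 'I_K -> R).
Hypotheses (w_ge0 : forall j, 0 <= w j) (w_sum1 : \sum_j w j = 1).

Lemma le_convex_sum (f : 'I_K -> R) a : (forall j, a <= f j) -> a <= \sum_j w j * f j.
Proof.
move=> H; rewrite -[a]mul1r -w_sum1 mulr_suml.
by apply: ler_sum => j _; rewrite ler_wpM2l.
Qed.

Lemma convex_sum_le (f : 'I_K -> R) a : (forall j, f j <= a) -> \sum_j w j * f j <= a.
Proof.
move=> H; rewrite -[a]mul1r -w_sum1 mulr_suml.
by apply: ler_sum => j _; rewrite ler_wpM2l.
Qed.

End ConvexSum.

Section FiniteMax.
Variables (R : realFieldType) (E : seq R).

Lemma maxE_ub (f : R -> R) e : e \in E -> f e <= maxE E f.
Proof. by move=> eE; apply: le_bigmax_seq. Qed.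

Lemma maxE_le (f : R -> R) x : E != [::] -> (forall e, e \in E -> f e <= x) -> maxE E f <= x.
Proof.
case: E => // e0 E' _ H; rewrite /maxE /= big_seq_cond.
by apply: bigmax_le => [|e /andP[eE _]]; apply: H; rewrite ?mem_head.
Qed.

Lemma eq_maxE (f g : R -> R) : (forall e, f e = g e) -> maxE E f = maxE E g.
Proof. by move=> fg; rewrite /maxE fg; apply: eq_bigr. Qed.

Lemma maxpos_le (f : R -> R) x : (exists2 e, e \in E & 0 < e) ->
  (forall e, e \in E -> 0 < e -> f e <= x) -> maxpos E f <= x.
Proof.
move=> [e1 e1E e1_gt0] H; rewrite /maxpos.
have Ep_le e : e \in [seq e <- E | 0 < e] -> f e <= x.
  by rewrite mem_filter => /andP[e_gt0 eE]; apply: H.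
have : e1 \in [seq e <- E | 0 < e] by rewrite mem_filter e1_gt0.
move: Ep_le; case: [seq e <- E | 0 < e] => // e0 s Ep_le _ /=.
rewrite big_seq_cond; apply: bigmax_le => [|e /andP[/Ep_le //]].
exact/Ep_le/mem_head.
Qed.

End FiniteMax.

Section GeometricSum.
Variable R : realFieldType.

(* [geosum k m = 1 + (1 - m) + ... + (1 - m)^(k-1)] for [m != 0]. *)
Definition geosum (k : nat) (m : R) : R := (1 - (1 - m) ^+ k) / m.

Lemma geosum0 m : geosum 0 m = 0.
Proof. by rewrite /geosum expr0 subrr mul0r. Qed.

Lemma geosumS k m : m != 0 -> geosum k.+1 m = 1 + (1 - m) * geosum k m.
Proof. by move=> m_neq0; rewrite /geosum exprS; field. Qed.

Lemma geosum_ge0 k m : 0 < m <= 1 -> 0 <= geosum k m.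
Proof.
move=> /andP[m_gt0 m_le1]; rewrite /geosum divr_ge0 ?(ltW m_gt0) // subr_ge0.
by rewrite exprn_ile1 ?subr_ge0 // lerBlDr lerDl ltW.
Qed.

Lemma mul_geosum_le1 k m : 0 < m <= 1 -> m * geosum k m <= 1.
Proof.
move=> /andP[m_gt0 m_le1]; rewrite /geosum mulrC -mulrA mulVf ?gt_eqF // mulr1.
by rewrite lerBlDr lerDl exprn_ge0 // subr_ge0.
Qed.

End GeometricSum.

Section OneUser.
Variables (R : realFieldType) (E : seq R) (amax lam : R) (u : user R).
Hypothesis Hu : user_ok E amax u.
Hypothesis HE0 : 0 \in E.
Hypothesis HEpos : exists2 e, e \in E & 0 < e.
Hypothesis HEnn : forall e, e \in E -> 0 <= e.
Hypothesis Hlam : 0 <= lam.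

Local Notation V := (@VI _ E lam u).
Local Notation z := (u_zeta u).
Local Notation tau := (u_tau u).
Local Notation p := (u_p u).
Local Notation be := (u_beta u).
Local Notation EV t i := (\sum_(j : 'I_(u_K u)) u_P u i j * @VI _ E lam u t j).

Let E_neq0 : E != [::]. Proof. by case: E HE0. Qed.

Let beta_ge0 : 0 <= be.
Proof. by case: Hu => [[_ [_ [_ [_ [_ [_ [? _]]]]]]] _]. Qed.

Let p_gt0 : 0 < p.
Proof. by case: Hu => [[_ [q0 [qp _]]] _]; apply: le_lt_trans qp. Qed.

Let p_le1 : p <= 1.
Proof. by case: Hu => [[_ [_ [_ [? _]]]] _]. Qed.

Let D_gt0 : (0 < u_D u)%N.
Proof. by case: Hu => [[_ [_ [_ [_ [_ [_ [_ [_ ?]]]]]]]] _]. Qed.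

Let P_ge0 i j : 0 <= u_P u i j.
Proof. by case: Hu => _ [_ [[? _] _]]. Qed.

Let P_sum1 i : \sum_j u_P u i j = 1.
Proof. by case: Hu => _ [_ [[_ ?] _]]. Qed.

Let eta_ge0 i : 0 <= u_eta u i.
Proof. by case: Hu => _ [[? _] _]. Qed.

Let eta_sum1 : \sum_i u_eta u i = 1.
Proof. by case: Hu => _ [[_ ?] _]. Qed.

Let zeta0 i : z i 0 = 0.
Proof. by case: Hu => _ [_ [_ [_ [? _]]]]. Qed.

Let zeta_bounds i e : e \in E ->
  [/\ 0 <= z i e, z i e <= 1, zmin u e <= z i e & z i e <= zmax u e].
Proof.
move=> eE; case: Hu => _ [_ [_ [z01 [_ [_ [_ [_ [zM zm]]]]]]]].
by have /andP[? ?] := z01 i e eE; split => //; [exact: zm | exact: zM].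
Qed.

Let zmin_pos e : e \in E -> 0 < e -> 0 < zmin u e <= 1.
Proof.
move=> eE e_gt0; case: Hu => _ [_ [_ [z01 [_ [zp _]]]]].
by rewrite zp //; have /andP[] := z01 (u_imin u) e eE.
Qed.

Let cost_ge0 e : e \in E -> 0 <= lam * e.
Proof. by move=> eE; rewrite mulr_ge0 // HEnn. Qed.

(* One step of the dynamic program from state [i]: reward [c] on success,
   continuation value [w] on failure. *)
Definition bellman i (c w : R) : R :=
  maxE E (fun e => - (lam * e) + z i e * c + (1 - z i e) * w).

Lemma bellman_ge i c w : w <= bellman i c w.
Proof.
by apply: le_trans (maxE_ub _ HE0); rewrite /= zeta0 mulr0 oppr0; lra.
Qed.

Lemma bellman_le i c w : w <= c -> bellman i c w <= c.
Proof.
move=> wc; apply: maxE_le => // e eE.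
have [z_ge0 z_le1 _ _] := zeta_bounds i eE; have := cost_ge0 eE.
have : 0 <= (1 - z i e) * (c - w) by rewrite mulr_ge0 // subr_ge0.
lra.
Qed.

Lemma bellman_ge_zmin i c w e L : e \in E -> L <= w -> L <= c ->
  - (lam * e) + zmin u e * c + (1 - zmin u e) * L <= bellman i c w.
Proof.
move=> eE Lw Lc; apply: le_trans (maxE_ub _ eE).
have [_ z_le1 zmin_le _] := zeta_bounds i eE.
have : 0 <= (z i e - zmin u e) * (c - L) by rewrite mulr_ge0 // subr_ge0.
have : 0 <= (1 - z i e) * (w - L) by rewrite mulr_ge0 // subr_ge0.
lra.
Qed.

Lemma bellman_le_zmax i c w m W : m <= w -> w <= c -> w <= W ->
  bellman i c w <= W + maxE E (fun e => - (lam * e) + zmax u e * (c - m)).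
Proof.
move=> mw wc wW; apply: maxE_le => // e eE.
have := maxE_ub (fun e => - (lam * e) + zmax u e * (c - m)) eE.
have [z_ge0 _ _ z_le_zmax] := zeta_bounds i eE.
have : 0 <= (zmax u e - z i e) * (c - w) by rewrite mulr_ge0 // subr_ge0.
have : 0 <= zmax u e * (w - m) by rewrite mulr_ge0 ?subr_ge0 ?(le_trans z_ge0).
lra.
Qed.

Lemma VI_pre t i : (t < tau)%N -> V t.+1 i = bellman i be (EV t i).
Proof. by move=> t_lt; rewrite /= t_lt. Qed.

(* After the prediction horizon the reward drops to [p β]; at the boundary
   slot the continuation is also scaled by [p], which [Vpost] absorbs. *)
Definition Vpost (t : nat) j := if t == tau then p * V t j else V t j.

Local Notation EVpost t i := (\sum_(j : 'I_(u_K u)) u_P u i j * Vpost t j).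

Lemma Vpost_tau j : Vpost tau j = p * V tau j.
Proof. by rewrite /Vpost eqxx. Qed.

Lemma Vpost_S t j : (tau <= t)%N -> Vpost t.+1 j = V t.+1 j.
Proof. by move=> le_tau_t; rewrite /Vpost gtn_eqF. Qed.

Lemma VI_post t i : (tau <= t)%N -> V t.+1 i = bellman i (p * be) (EVpost t i).
Proof.
rewrite /bellman leq_eqVlt => /orP[/eqP <-|t_gt] /=.
  rewrite ltnn eqxx; apply: eq_maxE => e.
  rewrite (eq_bigr _ (fun j _ => congr1 _ (Vpost_tau j))).
  by rewrite -[in RHS](eq_bigr _ (fun j _ => mulrCA _ _ _)) -mulr_sumr; ring.
rewrite ltnNge ltnW // eq_sym ltn_eqF //; apply: eq_maxE => e.
by rewrite /Vpost (gtn_eqF t_gt) mulrA.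
Qed.

Lemma Vu_S t : Vu E lam u t.+1 = Vu E lam u t
  + maxE E (fun e => - (lam * e) + zmax u e * (be - Order.max 0 (Vl E lam u t))).
Proof. by rewrite /Vu big_nat_recr. Qed.

Lemma tVu_tau : tVu E lam u tau = p * Vu E lam u tau.
Proof. by rewrite /tVu big_geq ?add0r // addn1. Qed.

Lemma tVu_S t : (tau <= t)%N -> tVu E lam u t.+1 = tVu E lam u t
  + maxE E (fun e => - (lam * e) + zmax u e *
      (p * be - Order.max 0 (Order.max (tVl E lam u tau) (tVl E lam u t)))).
Proof. by move=> le_tau_t; rewrite /tVu big_nat_recr ?addn1 //= addrAC. Qed.

Lemma VI_pre_range t i : (t <= tau)%N -> 0 <= V t i <= be.
Proof.
elim: t i => [|t IH] i t_le; first by rewrite lexx.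
have /andP[EV_ge0 EV_le] : 0 <= EV t i <= be.
  by rewrite le_convex_sum ?convex_sum_le // => j; have /andP[] := IH j (ltnW t_le).
rewrite VI_pre // (le_trans EV_ge0 (bellman_ge _ _ _)).
exact: bellman_le.
Qed.

Section LowerTrajectory.
Variable e : R.
Hypotheses (eE : e \in E) (e_gt0 : 0 < e).

Let zm_pos : 0 < zmin u e <= 1. Proof. exact: zmin_pos. Qed.
Let zm_neq0 : zmin u e != 0. Proof. by case/andP: zm_pos => /gt_eqF ->. Qed.

(* Value of playing [e] in every slot from the worst channel state. *)
Definition lowpre (t : nat) := geosum t (zmin u e) * (- (lam * e) + zmin u e * be).

Definition lowpost (t : nat) := - ((1 - p) * geosum (t - tau) (zmin u e) * (lam * e))
  + p * geosum t (zmin u e) * (- (lam * e) + zmin u e * be).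

Lemma lowpre_S t : lowpre t.+1 = - (lam * e) + zmin u e * be + (1 - zmin u e) * lowpre t.
Proof. by rewrite /lowpre geosumS //; ring. Qed.

Lemma lowpre_le_beta t : lowpre t <= be.
Proof.
have := mulr_ge0 (geosum_ge0 t zm_pos) (cost_ge0 eE).
have := mul_geosum_le1 t zm_pos.
have : 0 <= (1 - zmin u e * geosum t (zmin u e)) * be.
  by rewrite mulr_ge0 // subr_ge0 mul_geosum_le1.
rewrite /lowpre; lra.
Qed.

Lemma lowpost_tau : lowpost tau = p * lowpre tau.
Proof. by rewrite /lowpost /lowpre subnn geosum0; ring. Qed.

Lemma lowpost_S t : (tau <= t)%N ->
  lowpost t.+1 = - (lam * e) + zmin u e * (p * be) + (1 - zmin u e) * lowpost t.
Proof. by move=> le_tau_t; rewrite /lowpost subSn // !geosumS //; ring. Qed.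

Lemma lowpost_le t : lowpost t <= p * be.
Proof.
have : 0 <= (1 - p) * geosum (t - tau) (zmin u e) * (lam * e).
  by rewrite mulr_ge0 ?cost_ge0 // mulr_ge0 ?subr_ge0 ?geosum_ge0.
have : p * lowpre t <= p * be by rewrite ler_wpM2l ?(ltW p_gt0) ?lowpre_le_beta.
rewrite /lowpost /lowpre; lra.
Qed.

Lemma lowpre_le_VI t i : (t <= tau)%N -> lowpre t <= V t i.
Proof.
elim: t i => [|t IH] i t_le; first by rewrite /lowpre geosum0 mul0r.
rewrite VI_pre // lowpre_S; apply: bellman_ge_zmin => //.
  by apply: le_convex_sum => // j; apply: IH (ltnW t_le).
exact: lowpre_le_beta.
Qed.

Lemma lowpost_le_Vpost d j : lowpost (tau + d) <= Vpost (tau + d) j.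
Proof.
elim: d j => [|d IH] j.
  by rewrite !addn0 lowpost_tau Vpost_tau ler_wpM2l ?(ltW p_gt0) ?lowpre_le_VI.
rewrite addnS Vpost_S ?leq_addr // VI_post ?leq_addr // lowpost_S ?leq_addr //.
by apply: bellman_ge_zmin; [|exact: le_convex_sum|exact: lowpost_le].
Qed.

End LowerTrajectory.

Lemma Vl_le_VI t i : (t <= tau)%N -> Vl E lam u t <= V t i.
Proof.
case: t => [|t] t_le; first by rewrite lexx.
by apply: maxpos_le => // e eE e_gt0; apply: (lowpre_le_VI eE e_gt0).
Qed.

Lemma VI_le_Vu t i : (t <= tau)%N -> V t i <= Vu E lam u t.
Proof.
elim: t i => [|t IH] i t_le; first by rewrite /Vu big_geq.
have t_le' := ltnW t_le.
rewrite VI_pre // Vu_S; apply: bellman_le_zmax.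
- rewrite ge_max; apply/andP; split; apply: le_convex_sum => // j.
    by have /andP[] := VI_pre_range j t_le'.
  exact: Vl_le_VI.
- by apply: convex_sum_le => // j; have /andP[] := VI_pre_range j t_le'.
- by apply: convex_sum_le => // j; apply: IH.
Qed.

Lemma Vpost_ge_const a d j : (forall k, a <= Vpost tau k) -> a <= Vpost (tau + d) j.
Proof.
move=> a_le; elim: d j => [|d IH] j; first by rewrite addn0.
rewrite addnS Vpost_S ?leq_addr // VI_post ?leq_addr //.
by apply: le_trans (bellman_ge _ _ _); apply: le_convex_sum.
Qed.

Lemma Vpost_le_pbeta d j : Vpost (tau + d) j <= p * be.
Proof.
elim: d j => [|d IH] j.
  by rewrite !addn0 Vpost_tau ler_wpM2l ?(ltW p_gt0) //; case/andP: (VI_pre_range j (leqnn _)).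
rewrite addnS Vpost_S ?leq_addr // VI_post ?leq_addr //.
by apply: bellman_le; apply: convex_sum_le.
Qed.

Lemma Vpost_ge0 d j : 0 <= Vpost (tau + d) j.
Proof.
apply: Vpost_ge_const => k; rewrite Vpost_tau mulr_ge0 ?(ltW p_gt0) //.
by case/andP: (VI_pre_range k (leqnn _)).
Qed.

Lemma tVl_le_Vpost d j : tVl E lam u (tau + d) <= Vpost (tau + d) j.
Proof. by apply: maxpos_le => // e eE e_gt0; exact: (lowpost_le_Vpost eE e_gt0). Qed.

Lemma tVl_tau_le_Vpost d j : tVl E lam u tau <= Vpost (tau + d) j.
Proof. by apply: Vpost_ge_const => k; rewrite -[tau]addn0 tVl_le_Vpost. Qed.

Lemma Vpost_le_tVu d j : Vpost (tau + d) j <= tVu E lam u (tau + d).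
Proof.
elim: d j => [|d IH] j.
  by rewrite !addn0 Vpost_tau tVu_tau ler_wpM2l ?(ltW p_gt0) ?VI_le_Vu.
rewrite addnS Vpost_S ?leq_addr // VI_post ?leq_addr // tVu_S ?leq_addr //.
apply: bellman_le_zmax; last 2 first.
- by apply: convex_sum_le => // k; apply: Vpost_le_pbeta.
- by apply: convex_sum_le => // k; apply: IH.
rewrite !ge_max; apply/and3P; split; apply: le_convex_sum => // k.
- exact: Vpost_ge0.
- exact: tVl_tau_le_Vpost.
- exact: tVl_le_Vpost.
Qed.

Lemma EVI_tau_bounds :
  Order.max 0 (Vl E lam u tau) <= EVI E lam u tau <= Order.min be (Vu E lam u tau).
Proof.
rewrite ge_max le_min -!andbA; apply/and4P; split.
- by apply: le_convex_sum => // j; case/andP: (VI_pre_range j (leqnn _)).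
- by apply: le_convex_sum => // j; apply: Vl_le_VI.
- by apply: convex_sum_le => // j; case/andP: (VI_pre_range j (leqnn _)).
- by apply: convex_sum_le => // j; apply: VI_le_Vu.
Qed.

Lemma EVI_horizon_bounds :
  Order.max 0 (Order.max (tVl E lam u tau) (tVl E lam u (tau + u_D u)))
    <= EVI E lam u (tau + u_D u)
  <= Order.min (p * be) (tVu E lam u (tau + u_D u)).
Proof.
have V_post j : V (tau + u_D u) j = Vpost (tau + u_D u) j.
  by case: (u_D u) D_gt0 => // d _; rewrite addnS Vpost_S ?leq_addr.
rewrite /EVI (eq_bigr _ (fun j _ => congr1 _ (V_post j))).
rewrite !ge_max le_min -!andbA; apply/and5P; split.
- by apply: le_convex_sum => // j; apply: Vpost_ge0.
- by apply: le_convex_sum => // j; apply: tVl_tau_le_Vpost.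
- by apply: le_convex_sum => // j; apply: tVl_le_Vpost.
- by apply: convex_sum_le => // j; apply: Vpost_le_pbeta.
- by apply: convex_sum_le => // j; apply: Vpost_le_tVu.
Qed.

End OneUser.

Lemma user_weights_ge0 (R : realFieldType) (E : seq R) (amax : R) (u : user R) :
  0 < amax -> user_ok E amax u ->
  [/\ 0 <= u_a u, 0 <= ta amax u & 0 <= (amax - ta amax u) * u_q u].
Proof.
move=> amax_gt0 [[a0 [q0 [qp [_ [qa [ap _]]]]]] _].
rewrite ler_pdivlMr // in qa; rewrite ler_pdivrMr // in ap.
have pq : 0 < u_p u - u_q u by lra.
split => //; first by rewrite /ta; apply: divr_ge0; lra.
by rewrite mulr_ge0 // subr_ge0 /ta ler_pdivrMr //; lra.
Qed.

Section DualBounds.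
Variables (R : realFieldType) (N : nat) (E : seq R) (B amax : R) (us : 'I_N -> user R).
Hypotheses (Hamax : 0 < amax) (HE0 : 0 \in E) (HEpos : exists2 e, e \in E & 0 < e).
Hypotheses (HEnn : forall e, e \in E -> 0 <= e) (Hus : forall n, user_ok E amax (us n)).
Variable lam : R.
Hypothesis Hlam : 0 <= lam.

Lemma gI_sandwich : gIl E B amax us lam <= gI E B amax us lam <= gIu E B amax us lam.
Proof.
rewrite !lerD2l; apply/andP; split; apply: ler_sum => n _;
  have [_ ta_ge0 w_ge0] := user_weights_ge0 Hamax (Hus n);
  have /andP[l0 u0] := EVI_tau_bounds (Hus n) HE0 HEpos HEnn Hlam;
  have /andP[lI uI] := EVI_horizon_bounds (Hus n) HE0 HEpos HEnn Hlam;
  by apply: lerD; apply: ler_wpM2l.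
Qed.

Lemma g0_sandwich : g0l E B us lam <= g0 E B us lam <= g0u E B us lam.
Proof.
rewrite !lerD2l; apply/andP; split; apply: ler_sum => n _;
  have [a_ge0 _ _] := user_weights_ge0 Hamax (Hus n);
  have /andP[l0 u0] := EVI_tau_bounds (Hus n) HE0 HEpos HEnn Hlam;
  by apply: ler_wpM2l.
Qed.

End DualBounds.

Theorem theorem10 (R : realFieldType) (N : nat) (E : seq R) (B amax : R)
  (us : 'I_N -> user R)
  (HB : 0 < B) (Hamax : 0 < amax)
  (HE0 : 0 \in E) (HEpos : exists2 e, e \in E & 0 < e)
  (HEnn : forall e, e \in E -> 0 <= e)
  (Hus : forall n, user_ok E amax (us n))
  (phiI phi0 lam0s lamIs : R)
  (HphiI : (exists2 l, 0 <= l & gI E B amax us l = phiI) /\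
           (forall l, 0 <= l -> phiI <= gI E B amax us l))
  (Hphi0 : (exists2 l, 0 <= l & g0 E B us l = phi0) /\
           (forall l, 0 <= l -> phi0 <= g0 E B us l))
  (Hlam0 : 0 <= lam0s /\ forall l, 0 <= l -> g0l E B us lam0s <= g0l E B us l)
  (HlamI : 0 <= lamIs /\ forall l, 0 <= l -> gIl E B amax us lamIs <= gIl E B amax us l) :
  gIl E B amax us lamIs - g0u E B us lamIs <= phiI - phi0 /\
  phiI - phi0 <= gIu E B amax us lam0s - g0l E B us lam0s.
Proof.
case: HphiI => [[lI lI_ge0 <-] phiI_min]; case: Hphi0 => [[l0 l0_ge0 <-] phi0_min].
case: Hlam0 => [lam0_ge0 lam0_min]; case: HlamI => [lamI_ge0 lamI_min].
have sI l := gI_sandwich B Hamax HE0 HEpos HEnn Hus (lam := l).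
have s0 l := g0_sandwich B Hamax HE0 HEpos HEnn Hus (lam := l).
have /andP[gIl_lI _] := sI _ lI_ge0; have /andP[_ gIu_lam0] := sI _ lam0_ge0.
have /andP[g0l_l0 _] := s0 _ l0_ge0; have /andP[_ g0u_lamI] := s0 _ lamI_ge0.
have := phiI_min _ lam0_ge0; have := phi0_min _ lamI_ge0.
have := lam0_min _ l0_ge0; have := lamI_min _ lI_ge0.
split; lra.
Qed.
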